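(* Let $\Gamma\curvearrowright^{\sigma}(X,\mu)$ be a probability measure preserving action of a countable group $\Gamma$ with spectral gap. Then the natural homomorphism $\mathrm H^1(\Gamma,\mathrm L^2(X,\mathbb R))\to\mathrm H^1(\Gamma,\mathrm L^0(X,\mathbb R))$ is injective.
   Context: $\Gamma$ acts on functions by $\sigma_g(f)(x)=f(g^{-1}x)$. The action has spectral gap if the Koopman representation on $\mathrm L^2(X,\mu)\ominus\mathbb C1$ has no almost invariant vectors; equivalently there are finite $F\subset\Gamma$ and $C>0$ with $\|\xi-\int\xi\,d\mu\|_2\le C\max_{g\in F}\|\sigma_g(\xi)-\xi\|_2$ for all $\xi\in\mathrm L^2(X)$. $\mathrm H^1(\Gamma,\mathcal A)$ is the group of 1-cocycles $c(gh)=c(g)+\sigma_g(c(h))$ modulo 1-coboundaries $c(g)=\sigma_g(b)-b$, $b\in\mathcal A$; $\mathrm L^0(X,\mathbb R)$ denotes a.e.-classes of measurable real functions. *)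

From HB Require Import structures.
From mathcomp Require Import all_boot all_order all_algebra.
From mathcomp Require Import monoid.
From mathcomp Require Import all_classical all_reals all_analysis.
Set Implicit Arguments. Unset Strict Implicit. Unset Printing Implicit Defensive.
Import Order.TTheory GRing.Theory Num.Theory.
Local Open Scope classical_set_scope.
Local Open Scope ring_scope.

#[short(type="countGroupType")]
HB.structure Definition CountGroup := {G of Group G & Countable G}.

Section Defs.
Context {G : countGroupType} {d : measure_display} {X : measurableType d}
  {R : realType}.

Definition pmp_action (mu : probability X R) (a : G -> X -> X) : Prop :=
  [/\ forall x, a (monoid.one : G) x = x,
      forall g h x, a (monoid.mul g h) x = a g (a h x),
      forall g, measurable_fun setT (a g) &
      forall g (A : set X), measurable A -> mu (a g @^-1` A) = mu A].

Definition koopman (a : G -> X -> X) (g : G) (f : X -> R) : X -> R :=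
  fun x => f (a (monoid.inv g) x).

Definition L2norm (mu : probability X R) (f : X -> R) : \bar R :=
  Lnorm mu 2%:E (EFin \o f).

Definition inL2 (mu : probability X R) (f : X -> R) : Prop :=
  measurable_fun setT f /\ finite_norm mu 2%:E f.

Definition spectral_gap (mu : probability X R) (a : G -> X -> X) : Prop :=
  exists (F : seq G) (C : R), 0 < C /\
    forall xi : X -> R, inL2 mu xi ->
      (L2norm mu (fun x => xi x - Rintegral mu setT xi)%R
        <= C%:E * \big[maxe/0%E]_(g <- F)
                     L2norm mu (fun x => koopman a g xi x - xi x)%R)%E.

(* 1-cocycle condition, almost everywhere (elements of L^0 / L^2 are
   a.e.-classes): c(gh) = c(g) + sigma_g(c(h)). *)
Definition cocycle (mu : probability X R) (a : G -> X -> X)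
  (c : G -> X -> R) : Prop :=
  forall g h, {ae mu, forall x,
    c (monoid.mul g h) x = c g x + koopman a g (c h) x}.

Definition coboundary_of (mu : probability X R) (a : G -> X -> X)
  (c : G -> X -> R) (b : X -> R) : Prop :=
  forall g, {ae mu, forall x, c g x = koopman a g b x - b x}.
End Defs.

From HB Require Import structures.
From mathcomp Require Import all_boot all_order all_algebra.
From mathcomp Require Import all_classical all_reals all_analysis.
From mathcomp Require Import measurable_realfun ring lra.
Set Implicit Arguments. Unset Strict Implicit. Unset Printing Implicit Defensive.
Import Order.TTheory GRing.Theory Num.Theory.
Local Open Scope classical_set_scope.
Local Open Scope ring_scope.

(* Write c1 - c2 = sigma(b) - b with b measurable.  The truncations
   f_n = min((|b| - N)^+, n) are bounded, hence in L^2, and depend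
   1-Lipschitzly on b, so ||sigma_g f_n - f_n||_2 <= ||(c1 - c2)(g)||_2;
   the spectral gap then bounds ||f_n - \int f_n||_2 uniformly in n.
   Choosing N with mu(|b| <= N) > 0, every f_n vanishes on that set, which
   bounds the means \int f_n and hence ||f_n||_2 uniformly.  By monotone
   convergence (|b| - N)^+ is in L^2, and so is b. *)

Section clip.
Context (R : realType).
Implicit Types N M u w : R.

Definition clip N M u := Num.min (Num.max (u - N) 0) M.

Lemma clip_ge0 N M u : 0 <= M -> 0 <= clip N M u.
Proof. by move=> M0; rewrite /clip le_min M0 le_max lexx orbT. Qed.

Lemma clip_le N M u : clip N M u <= M.
Proof. by rewrite /clip ge_min lexx orbT. Qed.

Lemma clip_eq0 N M u : u <= N -> 0 <= M -> clip N M u = 0.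
Proof.
by move=> uN M0; rewrite /clip (max_idPr _) ?subr_le0//; exact/min_idPl.
Qed.

Lemma clip_lipschitz N M u w : `|clip N M u - clip N M w| <= `|u - w|.
Proof.
have := ler_norm (u - w); have := ler_norm (w - u); rewrite distrC.
rewrite /clip ler_norml.
by case: (leP (u - N) 0); case: (leP (w - N) 0); case: (leP 0 M);
  case: (leP (u - N) M); case: (leP (w - N) M) => *; apply/andP; split; lra.
Qed.

Lemma sqr_clip_norm_sub_le N M s t :
  (clip N M `|s| - clip N M `|t|) ^+ 2 <= (s - t) ^+ 2.
Proof.
rewrite -[leLHS]real_normK ?num_real// -[leRHS]real_normK ?num_real//.
rewrite ler_sqr ?nnegrE//.
exact: le_trans (clip_lipschitz _ _ _ _) (ler_dist_dist _ _).
Qed.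

End clip.

Section measurability.
Context d (X : measurableType d) (R : realType).

Lemma measurable_clip (N M : R) (f : X -> R) : measurable_fun setT f ->
  measurable_fun setT (fun x => clip N M (f x)).
Proof.
move=> mf; apply: measurable_minr => //; apply: measurable_maxr => //.
exact: measurable_funB.
Qed.

Lemma measurable_normr (f : X -> R) : measurable_fun setT f ->
  measurable_fun setT (fun x => `|f x|).
Proof.
by move=> mf; apply: measurableT_comp => //; exact: normr_measurable.
Qed.

Lemma measurable_sublevel_normr (f : X -> R) (N : R) : measurable_fun setT f ->
  measurable [set x | `|f x| <= N].
Proof.
move=> /measurable_normr /(_ measurableT _ (measurable_itv `]-oo, N])).
by rewrite setTI; congr measurable; apply/seteqP; split => x /=; rewrite in_itv.
Qed.
End measurability.

Section square_integral.
Context d (X : measurableType d) (R : realType).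
Context (mu : {measure set X -> \bar R}).
Local Open Scope ereal_scope.

Definition L2sqnorm (h : X -> R) : \bar R := \int[mu]_x ((h x) ^+ 2)%:E.

Lemma measurable_EFin_sqr (h : X -> R) : measurable_fun setT h ->
  measurable_fun setT (fun x => ((h x) ^+ 2)%:E).
Proof. by move=> mh; apply/measurable_EFinP; exact: measurable_funX. Qed.

Lemma L2sqnorm_ge0 (h : X -> R) : 0 <= L2sqnorm h.
Proof. by apply: integral_ge0 => x _; rewrite lee_fin sqr_ge0. Qed.

Lemma le_L2sqnorm (h1 h2 : X -> R) :
  measurable_fun setT h1 -> measurable_fun setT h2 ->
  (forall x, (h1 x ^+ 2 <= h2 x ^+ 2)%R) -> L2sqnorm h1 <= L2sqnorm h2.
Proof.
move=> m1 m2 h12; apply: ge0_le_integral => //.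
- by move=> x _; rewrite lee_fin sqr_ge0.
- exact: measurable_EFin_sqr.
- exact: measurable_EFin_sqr.
by move=> x _; rewrite lee_fin.
Qed.

Lemma vanishing_L2sqnorm_sub_ge (h : X -> R) (m : R) (A : set X) :
  measurable_fun setT h -> measurable A -> (forall x, A x -> h x = 0%R) ->
  (m ^+ 2)%:E * mu A <= L2sqnorm (fun x => h x - m)%R.
Proof.
move=> mh mA hA.
have mhm : measurable_fun setT (fun x => h x - m)%R.
  exact: measurable_funB.
apply: (@le_trans _ _ (\int[mu]_x (m ^+ 2 * \1_A x)%:E)).
  under eq_integral do rewrite EFinM.
  rewrite ge0_integralZl_EFin ?sqr_ge0 ?integral_indic ?setIT//.
  by apply/measurable_EFinP; exact: measurable_indic.
apply: ge0_le_integral => //.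
- by move=> x _; rewrite lee_fin mulr_ge0 ?sqr_ge0.
- apply/measurable_EFinP.
  by apply: measurable_funM; [exact: measurable_cst|exact: measurable_indic].
- exact: measurable_EFin_sqr.
move=> x _; rewrite lee_fin /indic; have [/set_mem Ax|_] := boolP (x \in A).
  by rewrite mulr1 hA ?sub0r ?sqrrN.
by rewrite mulr0 sqr_ge0.
Qed.

Lemma L2sqnorm_le_of_truncations (h : X -> R) (B : \bar R) :
  measurable_fun setT h -> (forall x, 0 <= h x)%R ->
  (forall n : nat, L2sqnorm (fun x => Num.min (h x) n%:R) <= B) ->
  L2sqnorm h <= B.
Proof.
move=> mh h0 hB.
pose g n x := ((Num.min (h x) n%:R) ^+ 2)%:E.
have mg n : measurable_fun setT (g n).
  exact/measurable_EFin_sqr/measurable_minr.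
have g0 n x : setT x -> 0 <= g n x by move=> _; rewrite lee_fin sqr_ge0.
have g_nd x : setT x -> nondecreasing_seq (g ^~ x).
  move=> _ p q pq; rewrite lee_fin ler_sqr ?nnegrE ?le_min ?h0 ?ler0n//.
  by rewrite !ge_min lexx ler_nat pq !orbT.
have g_lim x : limn (g ^~ x) = ((h x) ^+ 2)%:E.
  apply/cvg_lim => //; apply: cvg_near_cst.
  near=> n; rewrite /g (min_idPl _) //.
  apply: ltW; apply: lt_le_trans (Num.Theory.truncnS_gt (h x)) _.
  rewrite ler_nat; near: n; exists (Num.truncn (h x)).+1 => //.
rewrite /L2sqnorm; under eq_integral do rewrite -g_lim.
have := @cvg_monotone_convergence _ _ _ mu _ measurableT _ mg g0 g_nd.
by move/cvge_to_le; apply; apply: nearW.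
Unshelve. all: by end_near.
Qed.

End square_integral.

Section probability_space.
Context d (X : measurableType d) (R : realType) (mu : probability X R).
Local Open Scope ereal_scope.

Let mu_setT : (mu : {measure set X -> \bar R}) [set: X] = 1.
Proof. exact: probability_setT. Qed.

Lemma L2normE (h : X -> R) : L2norm mu h = L2sqnorm mu h `^ 2^-1.
Proof.
rewrite /L2norm unlock /L2sqnorm; congr (_ `^ _); apply: eq_integral => x _ /=.
by rewrite powR_mulrn// real_normK// num_real.
Qed.

Lemma L2sqnormE (h : X -> R) : L2sqnorm mu h = L2norm mu h `^ 2.
Proof. by rewrite L2normE -poweRrM mulVf// poweRe1// L2sqnorm_ge0. Qed.

Lemma finite_norm_L2sqnorm (h : X -> R) :
  L2sqnorm mu h < +oo -> finite_norm mu 2%:E h.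
Proof.
by move=> hfin; rewrite /finite_norm -/(L2norm mu h) L2normE poweR_lty.
Qed.

Lemma L2sqnorm_le_sqr (h : X -> R) (k : R) :
  L2norm mu h <= k%:E -> L2sqnorm mu h <= (k ^+ 2)%:E.
Proof.
move=> hk.
have k0 : (0 <= k)%R by rewrite -lee_fin (le_trans (Lnorm_ge0 _ _ _) hk).
rewrite L2sqnormE (_ : (k ^+ 2)%:E = k%:E `^ 2); last first.
  by rewrite poweR_EFin powR_mulrn.
by apply: gt0_ler_poweR; rewrite ?in_itv/= ?Lnorm_ge0 ?lee_fin ?k0 ?leey.
Qed.

Lemma le_L2norm_ae (h1 h2 : X -> R) :
  measurable_fun setT h1 -> measurable_fun setT h2 ->
  {ae mu, forall x, (h1 x ^+ 2 <= h2 x ^+ 2)%R} -> L2norm mu h1 <= L2norm mu h2.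
Proof.
move=> m1 m2 h12; rewrite !L2normE; apply: gt0_ler_poweR;
  rewrite ?invr_ge0 ?in_itv/= ?L2sqnorm_ge0 ?leey//.
apply: ae_ge0_le_integral => //.
- by move=> x _; rewrite lee_fin sqr_ge0.
- exact: measurable_EFin_sqr.
- by move=> x _; rewrite lee_fin sqr_ge0.
- exact: measurable_EFin_sqr.
by apply: filterS h12 => x h _; rewrite lee_fin.
Qed.

Lemma inL2B (f h : X -> R) :
  inL2 mu f -> inL2 mu h -> inL2 mu (fun x => f x - h x)%R.
Proof.
move=> [mf ff] [mh fh]; split; first exact: measurable_funB.
have mNh : measurable_fun setT (fun x => - h x)%R by exact: measurableT_comp.
rewrite /finite_norm.
apply: le_lt_trans (@eminkowski _ _ _ mu f _ 2%:E mf mNh _) _.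
  by rewrite lee_fin ler1n.
rewrite lte_add_pinfty//.
by rewrite (_ : _ \o _ = \- (EFin \o h)) // oppe_Lnorm.
Qed.

Lemma inL2_bounded (f : X -> R) (M : R) :
  measurable_fun setT f -> (forall x, `|f x| <= M)%R -> inL2 mu f.
Proof.
move=> mf fM; split => //; apply: finite_norm_L2sqnorm.
apply: (@le_lt_trans _ _ (L2sqnorm mu (fun _ => M))).
  apply: le_L2sqnorm => // x.
  by have := fM x; rewrite ler_norml => /andP[? ?]; nra.
by rewrite /L2sqnorm integral_cst// mu_setT mule1 ltry.
Qed.

Lemma L2sqnorm_le_shift (h : X -> R) (m : R) : measurable_fun setT h ->
  L2sqnorm mu h <= 2%:E * L2sqnorm mu (fun x => h x - m)%R + (2 * m ^+ 2)%:E.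
Proof.
move=> mh.
have m2hm : measurable_fun setT (fun x => (2 * (h x - m) ^+ 2)%R).
  apply: measurable_funM; first exact: measurable_cst.
  exact/measurable_funX/measurable_funB.
apply: (@le_trans _ _ (\int[mu]_x ((2 * (h x - m) ^+ 2)%:E + (2 * m ^+ 2)%:E))).
  apply: ge0_le_integral => //.
  - by move=> x _; rewrite lee_fin sqr_ge0.
  - exact: measurable_EFin_sqr.
  - by apply: emeasurable_funD; [exact/measurable_EFinP|exact: measurable_cst].
  move=> x _; rewrite -EFinD lee_fin -subr_ge0.
  by rewrite (_ : _ - _ = (h x - 2 * m) ^+ 2)%R ?sqr_ge0//; ring.
rewrite ge0_integralD//; last 3 first.
- by move=> x _; rewrite lee_fin mulr_ge0 ?sqr_ge0.
- exact/measurable_EFinP.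
- by move=> x _; rewrite lee_fin mulr_ge0 ?sqr_ge0.
rewrite integral_cst// mu_setT mule1 leeD2r//.
under eq_integral do rewrite EFinM.
rewrite ge0_integralZl_EFin//; first by move=> x _; rewrite lee_fin sqr_ge0.
exact/measurable_EFin_sqr/measurable_funB.
Qed.

Lemma L2sqnorm_shift_lty (h : X -> R) (m : R) : measurable_fun setT h ->
  L2sqnorm mu h < +oo -> L2sqnorm mu (fun x => h x + m)%R < +oo.
Proof.
move=> mh hfin.
have hmfin : L2sqnorm mu h \is a fin_num by rewrite ge0_fin_numE ?L2sqnorm_ge0.
apply: le_lt_trans (L2sqnorm_le_shift m _) _.
  exact: measurable_funD.
under [X in L2sqnorm mu X]funext do rewrite addrK.
by rewrite -(fineK hmfin) -EFinM -EFinD ltry.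
Qed.

Lemma exists_sublevel_normr_gt0 (b : X -> R) : measurable_fun setT b ->
  exists N : nat, 0 < mu [set x | (`|b x| <= N%:R)%R].
Proof.
move=> mb; apply: contrapT => noN.
have null n : mu [set x | (`|b x| <= n%:R)%R] = 0.
  apply/eqP; rewrite eq_le measure_ge0 andbT leNgt; apply/negP => pos.
  by apply: noN; exists n.
have : mu.-negligible (\bigcup_n [set x | (`|b x| <= n%:R)%R]).
  apply: negligible_bigcup => n; exists [set x | (`|b x| <= n%:R)%R].
  by split; [exact: measurable_sublevel_normr|exact: null|].
have -> : \bigcup_n [set x | (`|b x| <= n%:R)%R] = setT.
  apply/seteqP; split => // x _; exists (Num.truncn `|b x|).+1 => //=.
  exact/ltW/Num.Theory.truncnS_gt.
move=> [B [_ B0]]; rewrite subTset => BT.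
by move: B0; rewrite BT mu_setT => /eqP; rewrite onee_eq0.
Qed.

Lemma vanishing_L2sqnorm_le (h : X -> R) (A : set X) (m k : R) :
  measurable_fun setT h -> measurable A -> 0 < mu A ->
  (forall x, A x -> h x = 0%R) ->
  L2sqnorm mu (fun x => h x - m)%R <= (k ^+ 2)%:E ->
  L2sqnorm mu h <= (2 * k ^+ 2 + 2 * (k ^+ 2 / fine (mu A)))%:E.
Proof.
move=> mh mA muA0 hA hk.
set δ := fine (mu A).
have muAE : (mu : measure X R) A = δ%:E by rewrite fineK// fin_num_measure.
have δ0 : (0 < δ)%R by rewrite -lte_fin -muAE.
have hmfin : L2sqnorm mu (fun x => h x - m)%R \is a fin_num.
  by rewrite ge0_fin_numE ?L2sqnorm_ge0// (le_lt_trans hk) ?ltry.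
have := vanishing_L2sqnorm_sub_ge mu m mh mA hA.
rewrite -(fineK hmfin) muAE -EFinM lee_fin => lower.
move: hk; rewrite -(fineK hmfin) lee_fin => upper.
have m2 : (m ^+ 2 <= k ^+ 2 / δ)%R.
  by rewrite ler_pdivlMr//; exact: le_trans lower upper.
apply: le_trans (L2sqnorm_le_shift m mh) _.
by rewrite -(fineK hmfin) -EFinM -EFinD lee_fin; lra.
Qed.

Lemma L2sqnorm_lty_of_clips (b : X -> R) (N k : R) :
  measurable_fun setT b -> 0 < mu [set x | (`|b x| <= N)%R] ->
  (forall n : nat, exists m : R,
    L2norm mu (fun x => clip N n%:R `|b x| - m)%R <= k%:E) ->
  L2sqnorm mu b < +oo.
Proof.
move=> mb muN hk.
set A := [set x | (`|b x| <= N)%R] in muN.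
have mnb := measurable_normr mb.
pose h x := Num.max (`|b x| - N)%R 0%R.
have mh : measurable_fun setT h.
  by apply: measurable_maxr => //; exact: measurable_funB.
have h_bounded : L2sqnorm mu h < +oo.
  apply: le_lt_trans (ltry (2 * k ^+ 2 + 2 * (k ^+ 2 / fine (mu A))))%R.
  apply: L2sqnorm_le_of_truncations => // [x|n].
    by rewrite le_max lexx orbT.
  have [m /L2sqnorm_le_sqr hm] := hk n.
  apply: vanishing_L2sqnorm_le hm => //.
  - exact: measurable_clip mnb.
  - exact: measurable_sublevel_normr.
  - by move=> x /= bN; rewrite clip_eq0.
apply: (le_lt_trans _ (L2sqnorm_shift_lty N mh h_bounded)).
apply: le_L2sqnorm => // [|x]; first exact: measurable_funD.
have bh : (`|b x| <= h x + N)%R.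
  by rewrite /h /=; case: (leP (`|b x| - N)%R 0%R) => ?; lra.
by rewrite -real_normK ?num_real// ler_sqr ?nnegrE// (le_trans _ bh).
Qed.

End probability_space.

Section spectral_gap.
Context (G : countGroupType) d (X : measurableType d) (R : realType)
  (mu : probability X R) (a : G -> X -> X).
Local Open Scope ereal_scope.

Lemma spectral_gap_dominated_displacement (c : G -> X -> R) :
  spectral_gap mu a -> (forall g, L2norm mu (c g) < +oo) ->
  exists k : R, forall xi : X -> R, inL2 mu xi ->
    (forall g, L2norm mu (fun x => koopman a g xi x - xi x)%R
                 <= L2norm mu (c g)) ->
    L2norm mu (fun x => xi x - Rintegral mu setT xi)%R <= k%:E.
Proof.
move=> [F [C [C0 gap]]] c_fin.
pose K := \big[maxe/0]_(g <- F) L2norm mu (c g).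
have K_fin : K \is a fin_num.
  rewrite ge0_fin_numE ?bigmax_ge_id//.
  by apply: bigmax_lt => // g _; exact: c_fin.
exists (C * fine K)%R => xi xiL2 dom.
apply: le_trans (gap xi xiL2) _; rewrite EFinM fineK//.
apply: lee_wpmul2l; first by rewrite lee_fin ltW.
rewrite big_seq; apply: bigmax_le => [|g gF]; first exact: bigmax_ge_id.
by apply: le_trans (dom g) _; exact: (le_bigmax_seq _ _ _ _ gF).
Qed.

Lemma L2norm_koopman_clip_sub_le (b c : X -> R) (g : G) (N M : R) :
  measurable_fun setT (a (monoid.inv g)) -> measurable_fun setT b ->
  measurable_fun setT c ->
  {ae mu, forall x, c x = koopman a g b x - b x}%R ->
  L2norm mu (fun x =>
    koopman a g (fun y => clip N M `|b y|) x - clip N M `|b x|)%R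
  <= L2norm mu c.
Proof.
move=> ma mb mc cob; apply: le_L2norm_ae => //.
  apply: measurable_funB; last exact: measurable_clip (measurable_normr mb).
  exact: measurableT_comp (measurable_clip _ _ (measurable_normr mb)) ma.
by apply: filterS cob => x ->; exact: sqr_clip_norm_sub_le.
Qed.

End spectral_gap.

Theorem theorem7p4 (G : countGroupType) (d : measure_display)
  (X : measurableType d) (R : realType) (mu : probability X R)
  (a : G -> X -> X) :
  pmp_action mu a -> spectral_gap mu a ->
  forall c1 c2 : G -> X -> R,
    (forall g, inL2 mu (c1 g)) -> cocycle mu a c1 ->
    (forall g, inL2 mu (c2 g)) -> cocycle mu a c2 ->
    (exists b : X -> R, measurable_fun setT b /\
        coboundary_of mu a (fun g x => c1 g x - c2 g x) b) ->
    exists b : X -> R, inL2 mu b /\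
        coboundary_of mu a (fun g x => c1 g x - c2 g x) b.
Proof.
move=> [_ _ ma _] gap c1 c2 c1L2 _ c2L2 _ [b [mb cob]].
pose c g x := c1 g x - c2 g x.
have cL2 g : inL2 mu (c g) by exact: inL2B.
have [k hk] := spectral_gap_dominated_displacement gap (fun g => (cL2 g).2).
have [N muN] := exists_sublevel_normr_gt0 mu mb.
exists b; split => //; split => //; apply: finite_norm_L2sqnorm.
apply: (L2sqnorm_lty_of_clips mb muN) => n.
exists (Rintegral mu setT (fun x => clip N%:R n%:R `|b x|)); apply: hk.
- apply: (inL2_bounded mu (M := n%:R)).
    exact/measurable_clip/measurable_normr.
  by move=> x; rewrite ger0_norm ?clip_ge0 ?clip_le.
- by move=> g; exact: L2norm_koopman_clip_sub_le (ma _) mb (cL2 g).1 (cob g).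
Qed.
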